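(* Let $\mathcal H$ be a family of graphs. The following are equivalent: (i) there is a constant $c=c(\mathcal H)$ such that every connected $\mathcal H$-free graph $G$ has fewer than $c$ vertices $v$ with $\mathrm{sdeg}(v)\ge 2$ (equivalently, fewer than $c$ cut vertices); (ii) there is a positive integer $n$ such that $\mathcal H\le \{K_n^*,\ K_{1,n}^*,\ P_n\}$.
   Context: All graphs are finite, simple, undirected. For graphs $H_1,H_2$, write $H_1\prec H_2$ if $H_2$ contains an induced subgraph isomorphic to $H_1$. A graph $G$ is $\mathcal H$-free if no $H\in\mathcal H$ satisfies $H\prec G$. For families $\mathcal H_1,\mathcal H_2$, write $\mathcal H_1\le\mathcal H_2$ if for every $H_2\in\mathcal H_2$ there is $H_1\in\mathcal H_1$ with $H_1\prec H_2$. For a vertex $v$ of $G$, the sharp degree is $\mathrm{sdeg}(v)=c(G-v)-c(G)+1$, where $c(\cdot)$ is the number of connected components. $K_n$ and $P_n$ are the complete graph and path on $n$ vertices. $K_{1,n}^*$ is obtained from the star $K_{1,n}$ by attaching a new pendant vertex to each leaf; $K_n^*$ is obtained from $K_n$ by attaching a new pendant vertex to each vertex. *)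

From mathcomp Require Import all_boot.
From mathcomp Require Import ssrint ssralg ssrnum.
Set Implicit Arguments. Unset Strict Implicit. Unset Printing Implicit Defensive.

(* A finite simple graph on vertex set 'I_n (every finite graph is isomorphic
   to one of these). *)
Record graph := Graph {
  gn : nat;
  gadj : rel 'I_gn;
  gsym : symmetric gadj;
  girr : irreflexive gadj }.
Arguments gadj : clear implicits.

Definition mkrel n (r : rel 'I_n) : rel 'I_n :=
  fun x y => (x != y) && (r x y || r y x).

Lemma mkrel_sym n (r : rel 'I_n) : symmetric (mkrel r).
Proof. by move=> x y; rewrite /mkrel eq_sym orbC. Qed.

Lemma mkrel_irr n (r : rel 'I_n) : irreflexive (mkrel r).
Proof. by move=> x; rewrite /mkrel eqxx. Qed.

Definition mkgraph n (r : rel 'I_n) : graph :=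
  @Graph n (mkrel r) (@mkrel_sym n r) (@mkrel_irr n r).

Definition induced (H1 H2 : graph) : Prop :=
  exists f : 'I_(gn H1) -> 'I_(gn H2),
    injective f /\ forall x y, gadj H2 (f x) (f y) = gadj H1 x y.

Definition gfamily := graph -> Prop.

Definition free (F : gfamily) (G : graph) : Prop :=
  forall H, F H -> ~ induced H G.

Definition fam_le (F1 F2 : gfamily) : Prop :=
  forall H2, F2 H2 -> exists2 H1, F1 H1 & induced H1 H2.

Definition restr (G : graph) (A : {set 'I_(gn G)}) : rel 'I_(gn G) :=
  fun x y => [&& x \in A, y \in A & gadj G x y].

Definition ncomp_on (G : graph) (A : {set 'I_(gn G)}) : nat :=
  n_comp (restr A) A.

Definition ncomp (G : graph) : nat := ncomp_on [set: 'I_(gn G)].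
Definition ncomp_del (G : graph) (v : 'I_(gn G)) : nat := ncomp_on [set~ v].

Definition connected (G : graph) : Prop := ncomp G = 1.

Definition sdeg (G : graph) (v : 'I_(gn G)) : int :=
  ((ncomp_del v)%:Z - (ncomp G)%:Z + 1)%R.

Definition path_graph (n : nat) : graph :=
  @mkgraph n (fun x y => (y : nat) == x.+1).

(* K_n^* : vertices 0..n-1 form a clique, vertex n+i is pendant at i *)
Definition Kstar (n : nat) : graph :=
  @mkgraph (n + n) (fun x y => ((x < n) && (y < n)) || ((x < n) && ((y : nat) == x + n))).

(* K_{1,n}^* : vertex 0 centre, 1..n leaves, n+i pendant at leaf i *)
Definition K1nstar (n : nat) : graph :=
  @mkgraph (n + n).+1 (fun x y => ((x == 0 :> nat) && (1 <= y <= n))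
                                  || ((1 <= x <= n) && ((y : nat) == x + n))).

Definition three_family (n : nat) : gfamily :=
  fun G => G = Kstar n \/ G = K1nstar n \/ G = path_graph n.

From mathcomp Require Import all_boot.
From mathcomp Require Import ssrint ssralg ssrnum.
From mathcomp Require Import zify.
From Stdlib Require Import Classical.
Set Implicit Arguments. Unset Strict Implicit. Unset Printing Implicit Defensive.

(* (i) => (ii): K_n^*, K_{1,n}^* and P_n are connected and have at least n - 2
   cut vertices, so for n large each of them contains a member of H.

   (ii) => (i): fix a breadth-first search tree of a connected graph G rooted
   at r.  If some vertex has depth at least n - 1, its geodesic to r is an
   induced P_n.  Otherwise some level holds many cut vertices.  Every cut
   vertex v <> r has a neighbour one level deeper that v separates from r;
   these neighbours are pairwise non-adjacent and adjacent to no other cut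
   vertex of the level, so they hang from the cut vertices like a pendant
   matching.  By Ramsey, either n of the cut vertices form a clique, which
   gives K_n^*, or many of them are independent.  Then either one vertex of
   the level above sees n of them, which gives K_{1,n}^*, or every parent sees
   fewer than n of them, and a second Ramsey argument finds many of them whose
   parents form a pendant matching one level higher.  This cannot go on up to
   level 0, which holds a single vertex. *)

Definition cut_vertices (G : graph) : {set 'I_(gn G)} :=
  [set v | (Posz 2 <= sdeg v)%R].

Lemma induced_trans H1 H2 H3 : induced H1 H2 -> induced H2 H3 -> induced H1 H3.
Proof.
move=> [f [f_inj f_adj]] [g [g_inj g_adj]]; exists (g \o f).
by split=> [|x y /=]; [exact: inj_comp | rewrite g_adj f_adj].
Qed.

Section Connectivity.
Variable G : graph.
Local Notation V := 'I_(gn G).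
Local Notation adj := (gadj G).

Lemma restr_sym (A : {set V}) : symmetric (restr A).
Proof. by move=> x y; rewrite /restr gsym andbCA andbA. Qed.

Lemma connect_restr_sym (A : {set V}) : connect_sym (restr A).
Proof. exact: sym_connect_sym (restr_sym A). Qed.

Lemma restrT : restr [set: V] =2 adj.
Proof. by move=> x y; rewrite /restr !inE. Qed.

Lemma connect_forward_closed (A X : {set V}) x y :
  (forall a b, a \in X -> restr A a b -> b \in X) ->
  x \in X -> connect (restr A) x y -> y \in X.
Proof.
move=> clX xX /connectP[p + ->]; elim: p x xX => //= z p IH x xX /andP[xz zp].
exact: IH (clX _ _ xX xz) zp.
Qed.

Lemma ncomp_on_le1 (A : {set V}) z : z \in A ->
  (ncomp_on A <= 1) = [forall u in A, connect (restr A) z u].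
Proof.
move=> zA; have cs := connect_restr_sym A.
have rootA x : x \in A -> root (restr A) x \in A.
  move=> xA; apply: connect_forward_closed xA (connect_root _ x) => a b _.
  by case/and3P.
apply/idP/forall_inP => [le1 u uA | conn].
  move/card_le1_eqP: le1 => /(_ (root (restr A) z) (root (restr A) u)).
  rewrite -(root_connect cs) => -> //; rewrite !inE /= ?(roots_root cs) ?rootA //.
apply/card_le1_eqP => a b; rewrite !inE /= => /andP[/eqP ra aA] /andP[/eqP rb bA].
rewrite -ra -rb; apply/eqP; rewrite (root_connect cs).
have zb := conn b bA; rewrite cs in zb; exact: connect_trans zb (conn a aA).
Qed.

Lemma connected_connect : connected G -> forall x y, connect adj x y.
Proof.
move=> cG x y; have := ncomp_on_le1 (in_setT x).
rewrite -/(ncomp G) cG => /esym/forall_inP/(_ y (in_setT y)).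
by rewrite (eq_connect restrT).
Qed.

Lemma connect_connected h : (forall x, connect adj h x) -> connected G.
Proof.
move=> hub; apply/eqP; rewrite eqn_leq (ncomp_on_le1 (in_setT h)); apply/andP; split.
  by apply/forall_inP => x _; rewrite (eq_connect restrT).
apply/card_gt0P; exists (root (restr [set: V]) h).
by rewrite !inE /= andbT (roots_root (connect_restr_sym _)).
Qed.

Lemma connect_last_step u v : connect adj u v -> u != v ->
  exists2 w, adj w v & connect (restr [set~ v]) u w.
Proof.
case/connectP=> p + ->; elim: p u => [|z p IH] u /=; first by rewrite eqxx.
case/andP=> uz zp uv; case: (eqVneq z (last z p)) => [zv|zv].
  by exists u; [rewrite -zv | exact: connect0].
have [w wv zw] := IH z zp zv; exists w => //.
by apply: connect_trans zw; apply: connect1; rewrite /restr !inE uv zv.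
Qed.

Lemma sdeg_ge2E : connected G -> forall v x : V, x != v ->
  (Posz 2 <= sdeg v)%R = [exists u in [set~ v], ~~ connect (restr [set~ v]) x u].
Proof.
move=> cG v x xv.
have -> : sdeg v = Posz (ncomp_del v) by rewrite /sdeg cG GRing.addrNK.
by rewrite lez_nat ltnNge (@ncomp_on_le1 _ x) ?inE // negb_forall_in.
Qed.

End Connectivity.

Definition clique (T : finType) (e : rel T) (B : {set T}) :=
  {in B &, forall x y, x != y -> e x y}.
Definition stable (T : finType) (e : rel T) (B : {set T}) :=
  clique [rel x y | ~~ e x y] B.

Lemma clique_setU1 (T : finType) (e : rel T) a B : symmetric e -> clique e B ->
  {in B, forall x, e a x} -> clique e (a |: B).
Proof.
move=> e_sym cB aB x y; rewrite !inE => /predU1P[->|xB] /predU1P[->|yB] xy.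
- by rewrite eqxx in xy.
- exact: aB.
- by rewrite e_sym; apply: aB.
- exact: cB.
Qed.

Section Ramsey.
Variables (T : finType) (e : rel T).
Hypothesis e_sym : symmetric e.

Lemma ramsey k : forall s t (A : {set T}), s + t = k -> 2 ^ k <= #|A| ->
  exists2 B : {set T}, B \subset A &
    (s <= #|B| /\ clique e B) \/ (t <= #|B| /\ stable e B).
Proof.
have clique0 e' : clique e' set0 by move=> x; rewrite inE.
have ne_sym : symmetric [rel x y | ~~ e x y] by move=> x y /=; rewrite e_sym.
elim: k => [|k IH] s t A st_k A_big.
  by exists set0; rewrite ?sub0set //; left; split; [lia | exact: clique0].
case: s st_k => [|s] st_k.
  by exists set0; rewrite ?sub0set //; left; split; [lia | exact: clique0].
case: t st_k => [|t] st_k.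
  by exists set0; rewrite ?sub0set //; right; split; [lia | exact: clique0].
have [a aA] : exists a, a \in A by apply/card_gt0P; rewrite (leq_trans _ A_big) ?expn_gt0.
set N := (A :\ a) :&: [set x | e a x]; set M := (A :\ a) :\: [set x | e a x].
have NA : N \subset A by apply: subset_trans (subsetIl _ _) (subsetDl _ _).
have MA : M \subset A by apply: subset_trans (subsetDl _ _) (subsetDl _ _).
have aN : a \notin N by rewrite !inE eqxx.
have aM : a \notin M by rewrite !inE eqxx andbF.
have [N_big|M_big] : 2 ^ k <= #|N| \/ 2 ^ k <= #|M|.
  have : #|N| + #|M| = #|A|.-1 by rewrite cardsID (cardsD1 a A) aA.
  by move: A_big; rewrite expnS; lia.
- have [B BN [[sB cB]|[tB sB]]] := IH s t.+1 N ltac:(lia) N_big; last first.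
    by exists B; [exact: subset_trans BN NA | right].
  exists (a |: B); first by rewrite subUset sub1set aA (subset_trans BN NA).
  left; split; first by rewrite cardsU1 (contra (subsetP BN a) aN).
  by apply: clique_setU1 => // x /(subsetP BN); rewrite !inE => /andP[].
- have [B BM [[sB cB]|[tB sB]]] := IH s.+1 t M ltac:(lia) M_big.
    by exists B; [exact: subset_trans BM MA | left].
  exists (a |: B); first by rewrite subUset sub1set aA (subset_trans BM MA).
  right; split; first by rewrite cardsU1 (contra (subsetP BM a) aM).
  by apply: clique_setU1 => // x /(subsetP BM); rewrite !inE => /andP[].
Qed.

End Ramsey.

Lemma card_le_double_outdeg (T : finType) (a : rel T) (Z : {set T}) m :
  {in Z &, forall i j, a i j || a j i} ->
  {in Z, forall i, #|[set j in Z | a i j]| <= m} -> #|Z| <= m.*2.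
Proof.
move=> cover outdeg.
have pairs : #|Z| * #|Z| <= \sum_(i in Z) \sum_(j in Z) (a i j + a j i).
  rewrite -[X in X * _]sum1_card big_distrl /=; apply: leq_sum => i iZ.
  rewrite mul1n -sum1_card; apply: leq_sum => j jZ.
  by have := cover i j iZ jZ; case: (a i j); case: (a j i).
have pairs_sym : \sum_(i in Z) \sum_(j in Z) (a i j + a j i) =
                 (\sum_(i in Z) \sum_(j in Z) (a i j : nat)).*2.
  rewrite -addnn [X in _ = _ + X]exchange_big -big_split /=.
  by apply: eq_bigr => i _; rewrite big_split.
have out_sum : \sum_(i in Z) \sum_(j in Z) (a i j : nat) <= #|Z| * m.
  rewrite -sum1_card big_distrl /=; apply: leq_sum => i iZ.
  rewrite mul1n -big_mkcondr /= sum1_card; apply: leq_trans (outdeg i iZ).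
  by apply/eq_leq/eq_card => j; rewrite !inE.
nia.
Qed.

Lemma pigeonhole_levels (T : finType) (S : {set T}) (d : T -> nat) (f : nat -> nat) n :
  (forall x, d x < n) -> \sum_(l < n) f l < #|S| ->
  exists2 l, l < n & f l < #|[set x in S | d x == l]|.
Proof.
move=> d_lt S_big; have [/existsP[l hl]|none] :=
  boolP [exists l : 'I_n, f l < #|[set x in S | d x == l]|]; first by exists l.
move: S_big; rewrite ltnNge => /negP; case.
have -> : #|S| = \sum_(l < n) #|[set x in S | d x == l]|.
  rewrite -sum1_card (partition_big (fun x => Ordinal (d_lt x)) xpredT) //=.
  by apply: eq_bigr => l _; rewrite -sum1_card; apply: eq_bigl => x; rewrite !inE -val_eqE.
apply: leq_sum => l _; rewrite leqNgt; apply: contra none => hl.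
by apply/existsP; exists l.
Qed.

Section PendantMatching.
Variables (G : graph) (T : finType).
Local Notation V := 'I_(gn G).
Local Notation adj := (gadj G).

(* Edges [fx i -- fy i] (i in W) whose lower ends [fy i] are pairwise
   non-adjacent and adjacent to no other [fx j]; nothing is required of the
   graph induced on the upper ends [fx i]. *)
Definition pendant_matching (W : {set T}) (fx fy : T -> V) :=
  [/\ {in W &, injective fx}, {in W &, injective fy},
      {in W &, forall i j, adj (fx i) (fy j) = (i == j)} &
      {in W &, forall i j, ~~ adj (fy i) (fy j)}].

Lemma pendant_matching_sub (W W' : {set T}) (fx fy : T -> V) : W' \subset W ->
  pendant_matching W fx fy -> pendant_matching W' fx fy.
Proof.
move=> /subsetP sW [fx_inj fy_inj fxy_adj fy_stab].
by split=> i j /sW iW /sW jW; [exact: fx_inj | exact: fy_inj | exact: fxy_adj | exact: fy_stab].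
Qed.

Variables (W : {set T}) (fx fy : T -> V) (n : nat).
Hypothesis matchW : pendant_matching W fx fy.
Hypothesis W_big : n <= #|W|.

Lemma pendant_matching_neq : {in W &, forall i j, fx i != fy j}.
Proof.
case: matchW => _ _ fxy_adj fy_stab i j iW jW; apply/eqP=> fxy.
have := fxy_adj i i iW iW; rewrite fxy eqxx.
case: (eqVneq i j) => [<-|ij]; first by rewrite girr.
by have := fy_stab j i jW iW; rewrite gsym => /negbTE ->.
Qed.

Let w (i : 'I_n) : T := enum_val (widen_ord W_big i).
Let X i := fx (w i).
Let Y i := fy (w i).

Let w_inj : injective w.
Proof. by move=> i j /enum_val_inj/(congr1 val) /= /val_inj. Qed.

Let wW i : w i \in W. Proof. exact: enum_valP. Qed.

Let X_inj : injective X.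
Proof. by case: matchW => fx_inj _ _ _ i j /fx_inj-/(_ (wW i) (wW j))/w_inj. Qed.

Let Y_inj : injective Y.
Proof. by case: matchW => _ fy_inj _ _ i j /fy_inj-/(_ (wW i) (wW j))/w_inj. Qed.

Let XY_neq i j : X i != Y j.
Proof. exact: pendant_matching_neq. Qed.

Let XY_adj i j : adj (X i) (Y j) = (i == j).
Proof. by case: matchW => _ _ fxy_adj _; rewrite fxy_adj ?(inj_eq w_inj). Qed.

Let YX_adj i j : adj (Y i) (X j) = (i == j).
Proof. by rewrite gsym XY_adj eq_sym. Qed.

Let YY_adj i j : adj (Y i) (Y j) = false.
Proof. by case: matchW => _ _ _ fy_stab; apply/negbTE/fy_stab. Qed.

Lemma kstar_induced :
  {in W &, forall i j, i != j -> adj (fx i) (fx j)} -> induced (Kstar n) G.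
Proof.
move=> fx_clique.
have XX i j : adj (X i) (X j) = (i != j).
  case: (eqVneq i j) => [->|ij]; first by rewrite girr.
  by apply: fx_clique; rewrite ?wW // (inj_eq w_inj).
exists (fun a => match split a with inl i => X i | inr i => Y i end); split.
  move=> a b; case: splitP => i ha; case: splitP => j hb.
  - by move/X_inj=> ij; apply: val_inj; rewrite /= ha hb ij.
  - by move/eqP; rewrite (negbTE (XY_neq _ _)).
  - by move/esym/eqP; rewrite (negbTE (XY_neq _ _)).
  - by move/Y_inj=> ij; apply: val_inj; rewrite /= ha hb ij.
move=> a b; rewrite /= /mkrel -val_eqE /=.
case: splitP => i ha; case: splitP => j hb;
  rewrite ?XX ?XY_adj ?YX_adj ?YY_adj ha hb -?val_eqE /=;
  move: (ltn_ord i) (ltn_ord j); lia.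
Qed.

Lemma k1nstar_induced z :
  {in W, forall i, [&& adj z (fx i), z != fy i & ~~ adj z (fy i)]} ->
  {in W &, forall i j, i != j -> ~~ adj (fx i) (fx j)} -> induced (K1nstar n) G.
Proof.
move=> z_hub fx_stab.
have XX i j : adj (X i) (X j) = false.
  case: (eqVneq i j) => [->|ij]; first by rewrite girr.
  by apply/negbTE/fx_stab; rewrite ?wW // (inj_eq w_inj).
have [zX zY_neq zY] : [/\ forall i, adj z (X i), forall i, (z == Y i) = false
                        & forall i, adj z (Y i) = false].
  by split=> i; have /and3P[? /negbTE ? /negbTE ?] := z_hub _ (wW i).
have Xz i : adj (X i) z by rewrite gsym.
have Yz i : adj (Y i) z = false by rewrite gsym.
have zX_neq i : (z == X i) = false by apply/negbTE; apply: contraTneq (zX i) => <-; rewrite girr.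
have [Xz_neq Yz_neq] : (forall i, (X i == z) = false) /\ forall i, (Y i == z) = false.
  by split=> i; rewrite eq_sym.
have XY_eq i j : (X i == Y j) = false by apply/negbTE.
have YX_eq i j : (Y i == X j) = false by rewrite eq_sym.
exists (fun a : 'I_(1 + (n + n)) => match split a with
  | inl _ => z
  | inr b => match split b with inl i => X i | inr i => Y i end end); split.
  move=> [a ?] [b ?].
  case: splitP => [[[|//] ?] ha|c ha]; [|case: splitP => i hc];
  case: splitP => [[[|//] ?] hb|d hb]; try case: splitP => j hd;
  rewrite /= in ha hb *; move=> /eqP;
  rewrite ?eqxx ?zX_neq ?zY_neq ?Xz_neq ?Yz_neq ?XY_eq ?YX_eq ?(inj_eq X_inj) ?(inj_eq Y_inj) //;
  rewrite -?val_eqE => /eqP ij; rewrite /= in ij; apply: val_inj => /=; lia.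
move=> [a ?] [b ?]; rewrite /= /mkrel -val_eqE /=.
case: splitP => [[[|//] ?] ha|c ha]; [|case: splitP => i hc];
case: splitP => [[[|//] ?] hb|d hb]; try case: splitP => j hd;
  rewrite /= in ha hb *;
  rewrite ?girr ?zX ?Xz ?zY ?Yz ?XX ?XY_adj ?YX_adj ?YY_adj -?val_eqE /=;
  try move: (ltn_ord i); try move: (ltn_ord j); lia.
Qed.

End PendantMatching.

(* Enough indices at level l.+1 for Ramsey to give a clique of size n or a
   stable set of size 2 ^ (2n + b), and then for Ramsey to give a clique of
   size 2n or a stable set of size b, where b is the bound for level l. *)
Fixpoint descent_bound n l :=
  if l is l'.+1 then 2 ^ (n + 2 ^ (n.*2 + descent_bound n l')) else 2.

Section BreadthFirstSearch.
Variable G : graph.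
Hypothesis G_conn : connected G.
Variable r : 'I_(gn G).
Local Notation V := 'I_(gn G).
Local Notation adj := (gadj G).

Definition expand (B : {set V}) := B :|: [set y | [exists x in B, adj x y]].
Definition ball k := iter k expand [set r].

Lemma ball_mono k k' : k <= k' -> ball k \subset ball k'.
Proof.
elim: k' => [|k' IH]; first by rewrite leqn0 => /eqP->.
rewrite leq_eqVlt => /predU1P[->//|/IH kk']; exact: subset_trans kk' (subsetUl _ _).
Qed.

Lemma ball_adj k x y : x \in ball k -> adj x y -> y \in ball k.+1.
Proof. by move=> xB xy; rewrite /= !inE; apply/orP; right; apply/exists_inP; exists x. Qed.

Lemma ball_path k x p : x \in ball k -> path adj x p -> last x p \in ball (k + size p).
Proof.
elim: p k x => [|y p IH] k x xB /=; first by rewrite addn0.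
by case/andP=> xy yp; rewrite addnS -addSn; apply: IH yp; apply: ball_adj xy.
Qed.

Lemma ball_exists x : exists k, x \in ball k.
Proof.
have /connectP[p rp ->] := connected_connect G_conn r x.
by exists (0 + size p); apply: ball_path rp; rewrite inE.
Qed.

Definition dist x := ex_minn (ball_exists x).

Lemma mem_ball k x : (x \in ball k) = (dist x <= k).
Proof.
rewrite /dist; case: ex_minnP => m xm m_min; apply/idP/idP; first exact: m_min.
by move=> mk; apply: subsetP (ball_mono mk) _ xm.
Qed.

Lemma dist_root : dist r = 0.
Proof. by apply/eqP; rewrite -leqn0 -mem_ball inE. Qed.

Lemma dist_eq0 x : dist x = 0 -> x = r.
Proof. by move=> dx0; apply/set1P; rewrite -[[set r]]/(ball 0) mem_ball dx0. Qed.

Lemma dist_adj x y : adj x y -> dist y <= (dist x).+1.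
Proof. by move=> xy; rewrite -mem_ball; apply: ball_adj xy; rewrite mem_ball. Qed.

Lemma dist_gap_nonadj x y : (dist x).+2 <= dist y -> adj x y = false.
Proof. by move=> gap; apply/negP => /dist_adj; lia. Qed.

Definition parent x := odflt x [pick y | adj y x && (dist y == (dist x).-1)].

Lemma parent_spec x : x != r -> adj (parent x) x /\ dist (parent x) = (dist x).-1.
Proof.
move=> xr; rewrite /parent; case: pickP => [y /andP[-> /eqP] //|no_parent].
have dx_gt0 : 0 < dist x by rewrite lt0n; apply: contra xr => /eqP/dist_eq0->.
have : x \in ball (dist x).-1.+1 by rewrite prednK // mem_ball.
rewrite /= !inE mem_ball => /orP[|/exists_inP[y]]; first by lia.
rewrite mem_ball => dy yx; have := no_parent y; rewrite yx /=.
by have := dist_adj yx; lia.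
Qed.

Lemma parent_level x l : dist x = l.+1 -> adj (parent x) x /\ dist (parent x) = l.
Proof.
move=> dx; have xr : x != r by apply/eqP=> e; move: dx; rewrite e dist_root.
by have [px ->] := parent_spec xr; rewrite dx.
Qed.

Lemma dist_iter_parent j x : j <= dist x -> dist (iter j parent x) = dist x - j.
Proof.
elim: j => [|j IH] jx /=; first by rewrite subn0.
have xr : iter j parent x != r.
  by apply/eqP=> pr; have := IH (ltnW jx); rewrite pr dist_root; lia.
by rewrite (parent_spec xr).2 IH; lia.
Qed.

Lemma iter_parent_neq_root j x : j < dist x -> iter j parent x != r.
Proof.
by move=> jx; apply/eqP=> pr; have := dist_iter_parent (ltnW jx); rewrite pr dist_root; lia.
Qed.

Lemma path_graph_induced n x : n.-1 <= dist x -> induced (path_graph n) G.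
Proof.
move=> nx; have adjE i j : i < j < n ->
    adj (iter i parent x) (iter j parent x) = (j == i.+1).
  move=> ijn; rewrite gsym; case: (eqVneq j i.+1) => [-> | ji].
    by apply: (parent_spec (iter_parent_neq_root _)).1; lia.
  by rewrite dist_gap_nonadj // !dist_iter_parent; lia.
exists (fun i : 'I_n => iter i parent x); split.
  move=> [i ilt] [j jlt] /(congr1 dist) /=; have [iln jln] : i < n /\ j < n by [].
  by rewrite !dist_iter_parent; [move=> eq_d; apply: val_inj => /=; lia | lia | lia].
move=> [i ilt] [j jlt]; have [iln jln] : i < n /\ j < n by [].
rewrite /= /mkrel -val_eqE /=.
case: (ltngtP i j) => [ij|ji|->]; last by rewrite girr.
  by rewrite adjE //; lia.
by rewrite gsym adjE //; lia.
Qed.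

Definition separates v x := ~~ connect (restr [set~ v]) r x.

Lemma parent_chain_connect v x :
  (forall j, j <= dist x -> iter j parent x != v) -> connect (restr [set~ v]) r x.
Proof.
move Ed: (dist x) => k; elim: k x Ed => [|k IH] x dx chain_v.
  by rewrite (dist_eq0 dx) connect0.
have xr : x != r by apply/eqP=> xr; move: dx; rewrite xr dist_root.
have [px dpx] := parent_spec xr.
apply: (connect_trans (y := parent x)).
  apply: IH; first by rewrite dpx dx.
  by move=> j jk; rewrite -iterSr; apply: chain_v; lia.
apply: connect1; rewrite /restr !inE px andbT.
by apply/andP; split; [apply: (chain_v 1) | apply: (chain_v 0)]; lia.
Qed.

Lemma separates_ancestor v x : separates v x -> exists2 j, j <= dist x & iter j parent x = v.
Proof.
move=> sep; have [/existsP[j /eqP jv]|no_j] :=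
  boolP [exists j : 'I_(dist x).+1, iter j parent x == v].
  by exists j => //; exact: ltn_ord j.
case/negP: sep; apply: parent_chain_connect => j jx.
apply: contra no_j => /eqP jv; apply/existsP.
by exists (Ordinal (jx : j < (dist x).+1)); rewrite jv.
Qed.

Lemma separates_dist_lt v x : separates v x -> x != v -> dist v < dist x.
Proof.
case/separates_ancestor=> [[|j] jx <-]; first by rewrite eqxx.
by rewrite dist_iter_parent //; lia.
Qed.

Lemma separates_unique v w x : separates v x -> separates w x -> dist v = dist w -> v = w.
Proof.
case/separates_ancestor=> j jx <-; case/separates_ancestor=> k kx <-.
by rewrite !dist_iter_parent // => jk; congr iter; lia.
Qed.

Lemma separates_adj v x y : separates v x -> adj x y -> x != v -> y != v -> separates v y.
Proof.
move=> sep xy xv yv; apply: contra sep => ry; apply: connect_trans ry (connect1 _).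
by rewrite /restr !inE yv xv gsym.
Qed.

Lemma separated_neighbour v : v != r -> v \in cut_vertices G ->
  exists2 p, adj v p & separates v p.
Proof.
move=> vr; rewrite inE (sdeg_ge2E G_conn (x := r)) 1?eq_sym // => /exists_inP[u uv ru].
have [|w wv uw] := connect_last_step (connected_connect G_conn u v).
  by move: uv; rewrite !inE.
exists w; first by rewrite gsym.
by apply: contra ru => rw; apply: connect_trans rw _; rewrite connect_restr_sym.
Qed.

Definition pendant v := odflt v [pick p | adj v p && separates v p].

Lemma pendant_spec v : v != r -> v \in cut_vertices G ->
  [/\ adj v (pendant v), separates v (pendant v) & dist (pendant v) = (dist v).+1].
Proof.
move=> vr cut_v; have [vp sep_p] : adj v (pendant v) /\ separates v (pendant v).
  rewrite /pendant; case: pickP => [p /andP[] //|no_p].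
  by have [p vp sep_p] := separated_neighbour vr cut_v; have := no_p p; rewrite vp sep_p.
split=> //; have pv : pendant v != v by apply: contraTneq vp => ->; rewrite girr.
by have := separates_dist_lt sep_p pv; have := dist_adj vp; lia.
Qed.

Definition level_matching (T : finType) l (I : {set T}) (fx fy : T -> V) :=
  pendant_matching I fx fy /\ {in I, forall i, dist (fx i) = l /\ dist (fy i) = l.+1}.

Lemma cut_vertices_level_matching l :
  level_matching l.+1 [set v in cut_vertices G | dist v == l.+1] id pendant.
Proof.
set I := [set v in _ | _].
have pI v : v \in I -> [/\ dist v = l.+1, adj v (pendant v), separates v (pendant v),
                           pendant v != v & dist (pendant v) = l.+2].
  rewrite in_set => /andP[cut_v /eqP dv].
  have vr : v != r by apply/eqP=> e; move: dv; rewrite e dist_root.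
  have [vp sep dp] := pendant_spec vr cut_v.
  by split=> //; [apply: contraTneq vp => ->; rewrite girr | rewrite dp dv].
split; last by move=> v /pI[? _ _ _ ?].
split=> // [v w /pI[dv _ sep_v _ _] /pI[dw _ sep_w _ _] pvw| v w | v w].
- by apply: separates_unique sep_v _ _; rewrite ?pvw // dv dw.
- move=> /pI[dv _ _ _ _] /pI[dw wp sep_w pw _]; case: (eqVneq v w) => [-> //|vw].
  apply/negbTE/negP=> vpw; have := separates_dist_lt (separates_adj sep_w _ pw vw) vw.
  by rewrite dv dw ltnn gsym => /(_ vpw).
- move=> /pI[dv _ sep_v pv dpv] /pI[dw _ sep_w _ dpw].
  case: (eqVneq v w) => [<-|vw]; first by rewrite girr.
  apply/negP=> pvw; case/eqP: vw.
  apply: separates_unique (separates_adj sep_v pvw pv _) sep_w _.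
    by apply/eqP=> e; move: dpw; rewrite e dv; lia.
  by rewrite dv dw.
Qed.

Section Descent.
Variables (T : finType) (n : nat).
Hypothesis n_gt0 : 0 < n.

Lemma level0_matching_card (I : {set T}) fx fy : level_matching 0 I fx fy -> #|I| <= 1.
Proof.
case=> [[fx_inj _ _ _] lv]; apply/card_le1_eqP => i j iI jI; apply: fx_inj => //.
by have [/dist_eq0 -> _] := lv i iI; have [/dist_eq0 -> _] := lv j jI.
Qed.

Lemma level_matching_sub l (I Z : {set T}) fx fy : Z \subset I ->
  level_matching l I fx fy -> level_matching l Z fx fy.
Proof.
by move=> ZI [mI lv]; split; [exact: pendant_matching_sub mI | move=> i /(subsetP ZI)/lv].
Qed.

Definition parent_link (fx : T -> V) :=
  [rel i j | adj (parent (fx i)) (fx j) || adj (parent (fx j)) (fx i)].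

Lemma parent_level_matching l (Z : {set T}) fx fy :
  level_matching l.+1 Z fx fy -> stable [rel i j | adj (fx i) (fx j)] Z ->
  stable (parent_link fx) Z -> level_matching l Z (parent \o fx) fx.
Proof.
move=> [[fx_inj _ _ _] lv] fx_stab link_stab.
have par i : i \in Z -> adj (parent (fx i)) (fx i) /\ dist (parent (fx i)) = l.
  by move=> /lv[/parent_level].
split; last by move=> i iZ; have [_ ->] := par i iZ; have [-> _] := lv i iZ.
split=> // [i j iZ jZ /= pij|i j iZ jZ /=|i j iZ jZ].
- apply/eqP/negPn/negP=> ij; have := link_stab i j iZ jZ ij.
  by rewrite /= pij (par j jZ).1.
- case: (eqVneq i j) => [-> |ij]; first by rewrite (par j jZ).1.
  by apply/negbTE; have := link_stab i j iZ jZ ij; rewrite /= negb_or => /andP[].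
- by case: (eqVneq i j) => [->|ij]; [rewrite girr | exact: fx_stab].
Qed.

Lemma parent_link_clique_card l (I B Z : {set T}) fx fy :
  level_matching l.+1 I fx fy -> B \subset I -> Z \subset B ->
  (forall z, dist z = l -> #|[set i in B | adj z (fx i)]| < n) ->
  clique (parent_link fx) Z -> #|Z| < n.*2.
Proof.
move=> [_ lv] BI ZB few_nbrs cZ.
have par i : i \in Z -> adj (parent (fx i)) (fx i) /\ dist (parent (fx i)) = l.
  by move=> /(subsetP ZB)/(subsetP BI)/lv[/parent_level].
apply: leq_ltn_trans (_ : n.-1.*2 < n.*2); last by lia.
apply: (card_le_double_outdeg (a := [rel i j | adj (parent (fx i)) (fx j)])).
  move=> i j iZ jZ /=; case: (eqVneq i j) => [->|ij]; first by rewrite (par j jZ).1.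
  exact: cZ.
move=> i iZ; rewrite -ltnS prednK //; apply: leq_ltn_trans (few_nbrs _ (par i iZ).2).
apply: subset_leq_card; apply/subsetP => j.
by rewrite !inE /= => /andP[/(subsetP ZB) -> ->].
Qed.

Lemma level_matching_induces l (I : {set T}) fx fy : level_matching l I fx fy ->
  descent_bound n l <= #|I| -> induced (Kstar n) G \/ induced (K1nstar n) G.
Proof.
elim: l I fx fy => [|l IH] I fx fy lmI I_big.
  by have := level0_matching_card lmI; move: I_big => /=; lia.
have fx_sym : symmetric [rel i j | adj (fx i) (fx j)] by move=> i j /=; rewrite gsym.
have [B BI [[nB cB]|[tB sB]]] := ramsey fx_sym erefl I_big.
  by left; apply: kstar_induced (pendant_matching_sub BI lmI.1) nB cB.
have [/existsP[z /andP[/eqP dz hub]]|no_hub] :=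
  boolP [exists z, (dist z == l) && (n <= #|[set i in B | adj z (fx i)]|)].
  right; set W := [set i in B | adj z (fx i)].
  have WB : W \subset B by apply/subsetP => i; rewrite inE => /andP[].
  apply: (k1nstar_induced (z := z) (pendant_matching_sub (subset_trans WB BI) lmI.1) hub).
    move=> i; rewrite inE => /andP[iB ->]; have [_ dy] := lmI.2 i (subsetP BI i iB).
    rewrite dist_gap_nonadj ?dz ?dy // andbT.
    by apply/eqP=> e; move: dy; rewrite -e dz; lia.
  by move=> i j /(subsetP WB) iB /(subsetP WB) jB; apply: sB.
have few_nbrs z : dist z = l -> #|[set i in B | adj z (fx i)]| < n.
  move=> dz; rewrite ltnNge; apply: contra no_hub => hub.
  by apply/existsP; exists z; rewrite dz eqxx.
have link_sym : symmetric (parent_link fx) by move=> i j /=; rewrite orbC.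
have [Z ZB [[qZ cZ]|[tZ sZ]]] := ramsey link_sym erefl tB.
  by have := parent_link_clique_card lmI BI ZB few_nbrs cZ; lia.
apply: IH (parent_level_matching (level_matching_sub _ lmI) _ sZ) tZ.
  exact: subset_trans ZB BI.
by move=> i j /(subsetP ZB) iB /(subsetP ZB) jB; apply: sB.
Qed.

End Descent.

Lemma shallow_cut_vertices_induce n : 0 < n -> (forall x, dist x < n) ->
  \sum_(l < n) descent_bound n l < #|cut_vertices G| ->
  induced (Kstar n) G \/ induced (K1nstar n) G.
Proof.
move=> n_gt0 shallow many_cuts.
have [[|l] _ big_level] := pigeonhole_levels shallow many_cuts.
  suff : #|[set v in cut_vertices G | dist v == 0]| <= #|[set r]|.
    by rewrite cards1; move: big_level => /=; lia.
  by apply/subset_leq_card/subsetP => v; rewrite !inE => /andP[_ /eqP/dist_eq0->].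
by apply: (level_matching_induces n_gt0 (cut_vertices_level_matching l)); apply: ltnW.
Qed.

End BreadthFirstSearch.

Lemma many_cut_vertices_induce n : 0 < n -> exists c, forall G : graph, connected G ->
  c <= #|cut_vertices G| -> exists2 X, three_family n X & induced X G.
Proof.
move=> n_gt0; exists (\sum_(l < n) descent_bound n l).+1 => G G_conn many_cuts.
have [r _] : exists r, r \in cut_vertices G by apply/card_gt0P; lia.
have [/existsP[x deep]|shallow] := boolP [exists x, n.-1 <= dist G_conn r x].
  by exists (path_graph n); [right; right | exact: path_graph_induced deep].
have [] := @shallow_cut_vertices_induce G G_conn r n n_gt0 _ many_cuts.
- by move=> x; move/existsPn: shallow => /(_ x); lia.
- by exists (Kstar n); [left |].
- by exists (K1nstar n); [right; left |].
Qed.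

Lemma card_interval_leq N (A : {set 'I_N}) k c : k + c <= N ->
  (forall a : 'I_N, k <= a < k + c -> a \in A) -> c <= #|A|.
Proof.
move=> kcN inA; have lt (i : 'I_c) : k + i < N by move: (ltn_ord i); lia.
have f_inj : injective (fun i => Ordinal (lt i)).
  by move=> i j [] /eqP; rewrite eqn_add2l => /eqP/val_inj.
rewrite -{1}[c]card_ord -cardsT -(card_imset _ f_inj).
apply/subset_leq_card/subsetP => _ /imsetP[i _ ->]; apply: inA => /=.
by move: (ltn_ord i); lia.
Qed.

Lemma pendant_neighbour_cut (G : graph) (v p : 'I_(gn G)) : connected G -> 2 < gn G ->
  p != v -> (forall b, gadj G p b -> b = v) -> v \in cut_vertices G.
Proof.
move=> G_conn G_big pv p_leaf.
have [y] : exists y, y \in ~: [set v; p].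
  by apply/card_gt0P; have := cardsC [set v; p]; rewrite cards2 card_ord; lia.
rewrite in_setC in_set2 => /norP[yv yp].
rewrite inE (sdeg_ge2E G_conn (x := p)) //; apply/exists_inP; exists y; first by rewrite in_setC1.
apply/negP=> py; suff : y \in [set p] by rewrite inE (negbTE yp).
apply: (connect_forward_closed _ (set11 p) py) => a b; rewrite inE => /eqP-> /and3P[_].
by rewrite in_setC1 => bv /p_leaf bv'; rewrite bv' eqxx in bv.
Qed.

Lemma radius2_connected (G : graph) (h : 'I_(gn G)) :
  (forall x, [\/ x = h, gadj G h x | exists2 y, gadj G h y & gadj G y x]) -> connected G.
Proof.
move=> near_h; apply: (connect_connected (h := h)) => x.
case: (near_h x) => [->|hx|[y hy yx]]; first exact: connect0.
  exact: connect1.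
exact: connect_trans (connect1 hy) (connect1 yx).
Qed.

Lemma Kstar_connected n : 0 < n -> connected (Kstar n).
Proof.
move=> n_gt0; have h_lt : 0 < gn (Kstar n) by rewrite [gn _]/=; lia.
apply: (radius2_connected (h := Ordinal h_lt)) => -[x x_lt].
have xn2 : x < n + n := x_lt; rewrite /= /mkrel -!val_eqE /=.
have [x0|x0] := eqVneq x 0; first by constructor 1; apply: val_inj.
have [xn|xn] := ltnP x n; first by constructor 2; lia.
have [xn'|xn'] := eqVneq x n; first by constructor 2; lia.
have y_lt : x - n < gn (Kstar n) by rewrite [gn _]/=; lia.
by constructor 3; exists (Ordinal y_lt); rewrite /= /mkrel -!val_eqE /=; lia.
Qed.

Lemma K1nstar_connected n : connected (K1nstar n).
Proof.
have h_lt : 0 < gn (K1nstar n) by [].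
apply: (radius2_connected (h := Ordinal h_lt)) => -[x x_lt].
have xn2 : x < (n + n).+1 := x_lt; rewrite /= /mkrel -!val_eqE /=.
have [x0|x0] := eqVneq x 0; first by constructor 1; apply: val_inj.
have [xn|xn] := leqP x n; first by constructor 2; lia.
have y_lt : x - n < gn (K1nstar n) by rewrite [gn _]/=; lia.
by constructor 3; exists (Ordinal y_lt); rewrite /= /mkrel -!val_eqE /=; lia.
Qed.

Lemma path_graph_connected n : 0 < n -> connected (path_graph n).
Proof.
move=> n_gt0; apply: (@connect_connected (path_graph n) (Ordinal n_gt0)) => -[x x_lt].
elim: x x_lt => [|x IH] x_lt; first exact/eq_connect0/val_inj.
have x_lt' : x < n by apply: ltnW.
apply: connect_trans (IH x_lt') (connect1 _).
by rewrite /= /mkrel -val_eqE /=; lia.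
Qed.

Lemma Kstar_cut_vertices n : 1 < n -> n <= #|cut_vertices (Kstar n)|.
Proof.
move=> n_gt1; apply: (@card_interval_leq _ _ 0) => [|[a a_lt] /= an].
  by rewrite [gn _]/=; lia.
have p_lt : a + n < gn (Kstar n) by rewrite [gn _]/=; lia.
apply: (pendant_neighbour_cut (p := Ordinal p_lt)).
- by apply: Kstar_connected; lia.
- by rewrite [gn _]/=; lia.
- by rewrite -val_eqE /=; lia.
- move=> [b b_lt]; have bn2 : b < n + n := b_lt.
  by rewrite /= /mkrel -val_eqE /= => pb; apply: val_inj => /=; lia.
Qed.

Lemma K1nstar_cut_vertices n : n <= #|cut_vertices (K1nstar n)|.
Proof.
apply: (@card_interval_leq _ _ 1) => [|[a a_lt] /= an].
  by rewrite [gn _]/=; lia.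
have p_lt : a + n < gn (K1nstar n) by rewrite [gn _]/=; lia.
apply: (pendant_neighbour_cut (p := Ordinal p_lt)).
- exact: K1nstar_connected.
- by rewrite [gn _]/=; lia.
- by rewrite -val_eqE /=; lia.
- move=> [b b_lt]; have bn2 : b < (n + n).+1 := b_lt.
  by rewrite /= /mkrel -val_eqE /= => pb; apply: val_inj => /=; lia.
Qed.

Lemma path_graph_cut_vertices n : n - 2 <= #|cut_vertices (path_graph n)|.
Proof.
have [n_le1|n_gt1] := leqP n 1; first by have -> : n - 2 = 0 by lia.
apply: (@card_interval_leq _ _ 1) => [|[a a_lt] /= an]; first by rewrite [gn _]/=; lia.
have a_lt' : a < n := a_lt.
have [n_gt0 last_lt] : 0 < n /\ n.-1 < n by lia.
rewrite inE (sdeg_ge2E (path_graph_connected n_gt0) (x := Ordinal n_gt0));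
  last by rewrite -val_eqE /=; lia.
apply/exists_inP; exists (Ordinal last_lt); first by rewrite in_setC1 -val_eqE /=; lia.
apply/negP=> conn; suff : Ordinal last_lt \in [set b : 'I_n | b < a] by rewrite inE /=; lia.
apply: (connect_forward_closed _ _ conn); last by rewrite inE /=; lia.
move=> [b b_lt] [c c_lt]; have c_lt' : c < n := c_lt.
by rewrite !inE /= /restr !inE /= /mkrel -!val_eqE /=; lia.
Qed.

Theorem theorem1p7 (F : gfamily) :
  (exists c : nat, forall G : graph, connected G -> free F G ->
      #|[set v : 'I_(gn G) | (Posz 2 <= sdeg v)%R]| < c)
  <->
  (exists2 n : nat, 0 < n & fam_le F (three_family n)).
Proof.
split=> [[c few_cuts] | [n n_gt0 F_le]].
  have hit X : connected X -> c <= #|cut_vertices X| -> exists2 H, F H & induced H X.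
    move=> X_conn many_cuts; apply: NNPP => miss.
    have X_free : free F X by move=> H FH HX; apply: miss; exists H.
    by have := few_cuts X X_conn X_free; rewrite ltnNge many_cuts.
  exists c.+2 => // _ [->|[->|->]]; apply: hit.
  - exact: Kstar_connected.
  - by apply: leq_trans _ (Kstar_cut_vertices _); lia.
  - exact: K1nstar_connected.
  - by apply: leq_trans _ (K1nstar_cut_vertices _); lia.
  - exact: path_graph_connected.
  - by apply: leq_trans _ (path_graph_cut_vertices _); rewrite subn2.
have [c many_induce] := many_cut_vertices_induce n_gt0.
exists c => G G_conn G_free; rewrite ltnNge; apply/negP.
move=> /(many_induce G G_conn)[X FX XG]; have [H FH HX] := F_le X FX.
exact: G_free H FH (induced_trans HX XG).
Qed.
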